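(* Assume the seeds are i.i.d. uniform on $[n]$. Let $[\eta_{\min},\eta_{\max}]\subset(0,\tfrac12)$ be a fixed compact interval. Let $(m_k)_{k\in\mathbb N}$ be positive integers with $m_k\to\infty$, let $(n_k)$ be an arbitrary sequence of even integers $n_k\ge6$, and let $(l_k)$ be integers with $2\le l_k\le n_k/2-1$ and $l_k/n_k\in[\eta_{\min},\eta_{\max}]$ for all $k$. Then $\lim_{k\to\infty}p_1(n_k,m_k,l_k)=1$.
   Context: Candidates $[n]$, $m$ voters; voter $j$ has the clockwise oriented preference list $(s_j,s_j+1,\dots,n,1,\dots,s_j-1)$ with seed $s_j$; seeds independent uniform on $[n]$. In an election among a non-empty $S\subseteq[n]$ each voter votes for the first candidate of $S$ in its list; $\Xi_S(i)$ is the number of votes for $i$. Two-round election with partition $(A,B)$: the winner of $A$ is the $a\in A$ with $\Xi_A(a)>\Xi_A(a')$ for all other $a'\in A$ (if none, nobody wins); likewise for $B$; between first-round winners $a,b$, $a$ wins iff $\Xi_{\{a,b\}}(a)>\Xi_{\{a,b\}}(b)$ (ties: nobody wins). $A^{(1,n,l)}=\{1,\dots,l\}\cup\{l+2i:1\le i\le(n-2l)/2\}$, $B^{(1,n,l)}=[n]\setminus A^{(1,n,l)}$, and $p_1(n,m,l)$ is the probability that candidate 1 wins with partition $(A^{(1,n,l)},B^{(1,n,l)})$. *)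

From HB Require Import structures.
From mathcomp Require Import all_boot all_order all_algebra.
From mathcomp Require Import all_classical all_reals all_analysis.
Set Implicit Arguments. Unset Strict Implicit. Unset Printing Implicit Defensive.
Import Order.TTheory GRing.Theory Num.Theory.

(* Candidates are the naturals 1..n. A set of candidates is a bool predicate
   on nat (only its trace on 1..n matters). *)

Definition pref (n s : nat) : seq nat :=
  [seq ((s.-1 + j) %% n).+1 | j <- iota 0 n].

(* The candidate of S a voter with seed s votes for: the first candidate of
   S in its list (0 if S contains no candidate, which never happens for
   non-empty S). *)
Definition vote (n : nat) (S : pred nat) (s : nat) : nat :=
  head 0 [seq c <- pref n s | S c].

(* Seeds of the m voters: seed of voter j is (sd j).+1 in 1..n. *)
Definition seeds (n m : nat) := {ffun 'I_m -> 'I_n}.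

Definition Xi (n m : nat) (sd : seeds n m) (S : pred nat) (i : nat) : nat :=
  #|[pred j : 'I_m | vote n S (sd j).+1 == i]|.

Definition wins (n m : nat) (sd : seeds n m) (S : pred nat) (a : nat) : bool :=
  (1 <= a <= n) && S a &&
  all (fun a' => (a' == a) || ~~ S a' || (Xi sd S a' < Xi sd S a)) (iota 1 n).

Definition pair2 (a b : nat) : pred nat := fun c => (c == a) || (c == b).

Definition two_round_wins (n m : nat) (sd : seeds n m) (A B : pred nat)
  (c : nat) : bool :=
  (wins sd A c &&
     has (fun b => wins sd B b &&
        (Xi sd (pair2 c b) b < Xi sd (pair2 c b) c)) (iota 1 n))
  || (wins sd B c &&
     has (fun a => wins sd A a &&
        (Xi sd (pair2 a c) a < Xi sd (pair2 a c) c)) (iota 1 n)).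

Definition Apart (n l : nat) : pred nat :=
  fun c => (1 <= c <= l) || has (fun i => c == l + 2 * i) (iota 1 ((n - 2 * l)./2)).
Definition Bpart (n l : nat) : pred nat :=
  fun c => (1 <= c <= n) && ~~ Apart n l c.

(* p_1(n,m,l): seeds i.i.d. uniform on [n], i.e. the uniform distribution on
   seeds n m (n^m equally likely outcomes). *)
Definition p1 (R : realType) (n m l : nat) : R :=
  (#|[pred sd : seeds n m | two_round_wins sd (Apart n l) (Bpart n l) 1]|%:R
     / (n ^ m)%:R)%R.

From HB Require Import structures.
From mathcomp Require Import all_boot all_order all_algebra.
From mathcomp Require Import all_classical all_reals all_analysis.
From mathcomp Require Import zify ring lra.
Import Order.TTheory GRing.Theory Num.Theory.
Import numFieldNormedType.Exports.

(* In the first round candidate 1 collects in A the l+1 seeds n-l+1, ..., n, 1,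
   and l+1 collects in B the l+1 seeds 1, ..., l+1; every other candidate of
   either part follows another candidate of its part at distance at most 2, so
   it collects at most 2 seeds.  In the final, 1 collects the n-l > n/2 seeds
   l+2, ..., n, 1 against l+1.  A vote count is a sum of m independent
   indicators with mean m (#seeds)/n, and the gaps above are at least
   eta_min m/2 and (1/2 - eta_max) m, i.e. linear in m.  By Chebyshev a count
   misses its mean by that much with probability O(#seeds/(m n)); the seed sets
   of one election are disjoint, so a union bound over all counts still gives
   failure probability O(1/m). *)

Lemma card_has_le {T : finType} (s : seq (pred T)) :
  #|[pred x | has (fun A : pred T => A x) s]| <= \sum_(A <- s) #|A|.
Proof.
elim: s => [|A s IHs]; first by rewrite big_nil leqn0; apply/eqP/eq_card0.
rewrite big_cons; apply: leq_trans (leq_add (leqnn #|A|) IHs).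
rewrite -cardUI; apply: leq_trans _ (leq_addr _ _); apply: subset_leq_card.
by apply/fintype.subsetP => x; rewrite !inE.
Qed.

Lemma sum_card_fiber_le {T : finType} {U : eqType} (f : T -> U) (s : seq U) :
  uniq s -> \sum_(a <- s) #|[pred x | f x == a]| <= #|T|.
Proof.
move=> uniq_s; rewrite -sum1_card.
under eq_bigr do rewrite -sum1_card big_mkcond /=.
rewrite exchange_big /=; apply: leq_sum => x _.
rewrite -big_mkcond (eq_bigl (pred1 (f x))) => [|a]; last by rewrite inE eq_sym.
by rewrite sum1_count count_uniq_mem //; case: (_ \in _).
Qed.

Section Chebyshev.
Local Open Scope ring_scope.
Variables (R : realFieldType) (I J : finType).

Definition hits (f : {ffun I -> J}) (t : pred J) : nat := #|[pred i | t (f i)]|.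

Definition deviation (f : {ffun I -> J}) (t : pred J) : R :=
  `|(hits f t)%:R - #|I|%:R * (#|t|%:R / #|J|%:R)|.

Lemma sumr_indicator {T : finType} (P : pred T) : \sum_(x : T) (P x : nat)%:R = #|P|%:R :> R.
Proof.
rewrite -sum1_card natr_sum [RHS]big_mkcond; apply: eq_bigr => x _.
by rewrite unfold_in; case: (P x).
Qed.

Lemma sum_ffun_mul (g : J -> R) (i i' : I) :
  \sum_(f : {ffun I -> J}) g (f i) * g (f i') =
  \prod_k \sum_x ((if k == i then g x else 1) * (if k == i' then g x else 1)).
Proof.
rewrite bigA_distr_bigA; apply: eq_bigr => f _.
by rewrite big_split -!big_mkcond !big_pred1_eq.
Qed.

(* The second moment of a sum of independent uniform samples of a centred [g]. *)
Lemma sum_ffun_sqr (g : J -> R) : \sum_x g x = 0 ->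
  \sum_(f : {ffun I -> J}) (\sum_i g (f i)) ^+ 2 =
  #|I|%:R * #|J|%:R ^+ #|I|.-1 * \sum_x g x ^+ 2.
Proof.
move=> centred.
have cross i i' : \sum_(f : {ffun I -> J}) g (f i) * g (f i') =
    (i' == i)%:R * (#|J|%:R ^+ #|I|.-1 * \sum_x g x ^+ 2).
  rewrite sum_ffun_mul (bigD1 i) //=; have [->|ne_ii'] := eqVneq i' i.
    rewrite eqxx mul1r mulrC; congr (_ * _).
    rewrite (eq_bigr (fun _ => #|J|%:R)) ?prodr_const ?cardC1 // => k /negbTE->.
    by rewrite sumr_const mulr1.
  rewrite eqxx; under eq_bigr do rewrite mulr1.
  by rewrite centred !mul0r.
rewrite (eq_bigr (fun f : {ffun I -> J} => \sum_i \sum_i' g (f i) * g (f i'))); last first.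
  by move=> f _; rewrite expr2 mulr_suml; under eq_bigr do rewrite mulr_sumr.
rewrite exchange_big; under eq_bigr do rewrite exchange_big /=.
under eq_bigr do under eq_bigr do rewrite cross.
under eq_bigr do rewrite -mulr_suml (sumr_indicator (pred1 _ : pred I)) card1 mul1r.
by rewrite sumr_const -[RHS]mulrA mulr_natl.
Qed.

Lemma card_deviation_ge (t : pred J) (d : R) : (0 < #|J|)%N -> 0 < d ->
  #|[pred f : {ffun I -> J} | d <= deviation f t]|%:R <=
  #|I|%:R * #|J|%:R ^+ #|I|.-1 / d ^+ 2 * #|t|%:R.
Proof.
move=> J_gt0 d_gt0; rewrite mulrAC ler_pdivlMr ?exprn_gt0 //.
pose p : R := #|t|%:R / #|J|%:R.
have Jp : #|J|%:R * p = #|t|%:R by rewrite mulrC divfK ?pnatr_eq0 -?lt0n.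
have p_ge0 : 0 <= p by rewrite divr_ge0.
pose g x : R := (t x : nat)%:R - p.
have centred : \sum_x g x = 0.
  by rewrite sumrB sumr_indicator sumr_const -[p *+ _]mulr_natl Jp subrr.
have sum_g (f : {ffun I -> J}) : \sum_i g (f i) = (hits f t)%:R - #|I|%:R * p.
  by rewrite sumrB (sumr_indicator [pred i | t (f i)]) sumr_const -[p *+ _]mulr_natl.
have var_g : \sum_x g x ^+ 2 <= #|t|%:R.
  have -> : \sum_x g x ^+ 2 = \sum_x ((t x : nat)%:R * (1 - 2 * p) + p ^+ 2).
    by apply: eq_bigr => x _; rewrite /g; case: (t x) => /=; ring.
  rewrite big_split /= -mulr_suml sumr_indicator sumr_const -[p ^+ 2 *+ _]mulr_natl.
  have -> : #|J|%:R * p ^+ 2 = #|t|%:R * p by rewrite expr2 mulrA Jp.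
  have : 0 <= #|t|%:R :> R by []; nra.
apply: (@le_trans _ _ (#|I|%:R * #|J|%:R ^+ #|I|.-1 * \sum_x g x ^+ 2)); last first.
  by rewrite ler_wpM2l ?mulr_ge0 ?exprn_ge0.
rewrite -sum_ffun_sqr // -sumr_indicator mulr_suml; apply: ler_sum => f _.
rewrite sum_g /=; case: (boolP (d <= _)) => [dev_ge|_]; last by rewrite mul0r sqr_ge0.
by rewrite mul1r -[X in _ <= X]real_normK ?num_real // lerXn2r ?nnegrE ?(ltW d_gt0).
Qed.
End Chebyshev.

Arguments hits {I J}.
Arguments deviation {R I J}.

Definition pref_at (n x j : nat) : nat := ((x + j) %% n).+1.

Lemma head_filter (T : Type) (x0 : T) (p : pred T) (s : seq T) :
  head x0 [seq y <- s | p y] = nth x0 s (find p s).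
Proof. by elim: s => //= y s IH; case: (p y). Qed.

Lemma vote_pref_at n x (S : pred nat) :
  vote n S x.+1 =
  nth 0 [seq pref_at n x j | j <- iota 0 n] (find (S \o pref_at n x) (iota 0 n)).
Proof. by rewrite /vote /pref head_filter find_map. Qed.

Lemma vote_first n x j0 (S : pred nat) : j0 < n -> S (pref_at n x j0) ->
  (forall j, j < j0 -> ~~ S (pref_at n x j)) -> vote n S x.+1 = pref_at n x j0.
Proof.
move=> lt_j0n Sj0 before; rewrite vote_pref_at.
have -> : find (S \o pref_at n x) (iota 0 n) = j0.
  have -> : iota 0 n = iota 0 j0 ++ iota j0 (n - j0) by rewrite -iotaD subnKC // ltnW.
  rewrite find_cat size_iota.
  have -> : has (S \o pref_at n x) (iota 0 j0) = false.
    by apply/negbTE/hasPn => j; rewrite mem_iota => /andP[_ /before].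
  by rewrite -(subnSK lt_j0n) /= Sj0 addn0.
by rewrite (nth_map 0) ?size_iota // nth_iota.
Qed.

Lemma vote_firstP n x a (S : pred nat) : vote n S x.+1 = a -> a != 0 ->
  exists2 j0, j0 < n /\ a = pref_at n x j0 &
    S (pref_at n x j0) /\ forall j, j < j0 -> ~~ S (pref_at n x j).
Proof.
rewrite vote_pref_at; set j0 := find _ _ => <- nz_a.
have lt_j0n : j0 < n.
  rewrite ltnNge; apply: contra nz_a => le_nj0.
  by rewrite nth_default // size_map size_iota.
have hasS : has (S \o pref_at n x) (iota 0 n) by rewrite has_find size_iota.
exists j0; first by rewrite (nth_map 0) ?size_iota // nth_iota.
split; first by have := nth_find 0 hasS; rewrite nth_iota.
move=> j lt_jj0; have := before_find 0 lt_jj0.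
by rewrite nth_iota ?add0n //= => [->|]; last exact: ltn_trans lt_j0n.
Qed.

Lemma pref_atE n x j : x < n -> j < n ->
  pref_at n x j = if x + j < n then x + j + 1 else x + j - n + 1.
Proof.
move=> lt_xn lt_jn; rewrite /pref_at; case: ltnP => h.
  by rewrite modn_small // addn1.
rewrite -(subnK h) modnDr modn_small ?addn1 //; lia.
Qed.

Lemma pref_at_pred n x j a : x < n -> 0 < j < n -> pref_at n x j = a -> 2 <= a ->
  pref_at n x j.-1 = a.-1.
Proof. move=> lt_xn /andP[? ?]; rewrite !pref_atE //; try lia; by do 2!case: ifP; lia. Qed.

Lemma vote_next n x c (S : pred nat) : x < c <= n -> S c ->
  (forall c', x < c' < c -> ~~ S c') -> vote n S x.+1 = c.
Proof.
move=> x_c Sc between; have lt_xn : x < n by lia.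
have Ec : pref_at n x (c.-1 - x) = c by rewrite pref_atE; [case: ifP|..]; lia.
rewrite -[RHS]Ec; apply: vote_first; rewrite ?Ec //; first lia.
by move=> j lt_j; rewrite pref_atE; [case: ifP => ?; [apply: between|]|..]; lia.
Qed.

Lemma vote_wrap n x (S : pred nat) : 0 < x < n -> S 1 ->
  (forall c', x < c' <= n -> ~~ S c') -> vote n S x.+1 = 1.
Proof.
move=> x_n S1 after.
have E1 : pref_at n x (n - x) = 1 by rewrite pref_atE; [case: ifP|..]; lia.
rewrite -[RHS]E1; apply: vote_first; rewrite ?E1 //; first lia.
by move=> j lt_j; rewrite pref_atE; [case: ifP => ?; [apply: after|]|..]; lia.
Qed.

Lemma vote_near n x a (S : pred nat) : 2 <= a <= n -> x < n ->
  S a.-1 || (3 <= a) && S a.-2 -> vote n S x.+1 = a -> (x == a.-1) || (x == a.-2).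
Proof.
move=> a_n lt_xn S_before /vote_firstP[|j0 [lt_j0n Ea] [_ before]]; first lia.
suff le_j01 : j0 <= 1 by move: Ea; rewrite pref_atE //; case: ifP; lia.
case/orP: S_before => [Sa1|/andP[a3 Sa2]].
  rewrite leqNgt; apply/negP => lt1j0; have /negP := before j0.-1 ltac:(lia).
  by rewrite (@pref_at_pred n x j0 a lt_xn _ (esym Ea)) //; lia.
rewrite leqNgt; apply/negP => lt1j0.
have E1 := @pref_at_pred n x j0 a lt_xn ltac:(lia) (esym Ea) ltac:(lia).
have E2 := @pref_at_pred n x j0.-1 a.-1 lt_xn ltac:(lia) E1 ltac:(lia).
by have /negP := before j0.-2 ltac:(lia); rewrite E2.
Qed.

Definition votes_for n (S : pred nat) (a : nat) : pred 'I_n :=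
  [pred x : 'I_n | vote n S x.+1 == a].

Lemma size_le_card n (P : pred 'I_n) (s : seq nat) : uniq s -> all (gtn n) s ->
  (forall x : 'I_n, (x : nat) \in s -> P x) -> size s <= #|P|.
Proof.
move=> uniq_s /allP s_n sP; rewrite cardE -(size_map val).
apply: uniq_leq_size => // y ys; apply/mapP; exists (Ordinal (s_n y ys)) => //.
by rewrite mem_enum; apply: sP.
Qed.

Lemma card_le_size n (P : pred 'I_n) (s : seq nat) :
  (forall x : 'I_n, P x -> (x : nat) \in s) -> #|P| <= size s.
Proof.
move=> Ps; rewrite cardE -(size_map val); apply: uniq_leq_size.
  by rewrite map_inj_uniq ?enum_uniq //; apply: val_inj.
by move=> y /mapP[x]; rewrite mem_enum => /Ps Px ->.
Qed.

Lemma card_votes_near n (S : pred nat) a :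
  2 <= a <= n -> S a.-1 || (3 <= a) && S a.-2 -> #|votes_for n S a| <= 2.
Proof.
move=> a_n S_before; apply: (@card_le_size _ _ [:: a.-1; a.-2]) => x /eqP.
by move/(@vote_near n x a S a_n (ltn_ord x) S_before); rewrite !inE.
Qed.

Section Election.
Local Open Scope ring_scope.
Variables (R : realFieldType) (n m : nat) (sd : seeds n m).
Hypothesis n_gt0 : (0 < n)%N.
Local Notation u := (m%:R / n%:R : R).

Lemma deviation_ltP (t : pred 'I_n) (d : R) : deviation sd t < d ->
  u * #|t|%:R - d < (hits sd t)%:R < u * #|t|%:R + d.
Proof.
rewrite /deviation !card_ord ltr_norml mulrA mulrAC => /andP[? ?].
by apply/andP; split; lra.
Qed.

Lemma wins_of_deviation (S : pred nat) w (p q : nat) (d : R) :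
  (1 <= w <= n)%N -> S w -> (p <= #|votes_for n S w|)%N ->
  (forall a, S a -> a != w -> (1 <= a <= n)%N -> (#|votes_for n S a| <= q)%N) ->
  (forall a, a \in iota 1 n -> deviation sd (votes_for n S a) < d) ->
  2 * d <= u * (p%:R - q%:R) -> wins sd S w.
Proof.
move=> w_n Sw p_w q_other dev_lt d_le; rewrite /wins w_n Sw /=.
apply/allP => a; rewrite mem_iota => a_n.
have [//|a_ne_w /=] := eqVneq a w; case Sa: (S a) => //=.
have u_ge0 : 0 <= u by rewrite divr_ge0.
have /deviation_ltP/andP[_ hits_a] := dev_lt a ltac:(rewrite mem_iota; lia).
have /deviation_ltP/andP[hits_w _] := dev_lt w ltac:(rewrite mem_iota; lia).
have le_a : u * #|votes_for n S a|%:R <= u * q%:R.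
  by rewrite ler_wpM2l // ler_nat q_other //; lia.
have le_w : u * p%:R <= u * #|votes_for n S w|%:R by rewrite ler_wpM2l // ler_nat.
rewrite -(ltr_nat R); lra.
Qed.

Lemma duel_of_deviation a b (k : nat) (d : R) : a != b ->
  (k <= #|votes_for n (pair2 a b) a|)%N ->
  deviation sd (votes_for n (pair2 a b) a) < d -> d <= u * (k%:R - n%:R / 2) ->
  (Xi sd (pair2 a b) b < Xi sd (pair2 a b) a)%N.
Proof.
move=> a_ne_b k_a /deviation_ltP/andP[hits_a _] d_le.
have votes_ab : (Xi sd (pair2 a b) a + Xi sd (pair2 a b) b <= m)%N.
  have := sum_card_fiber_le (fun j => vote n (pair2 a b) (sd j).+1) [:: a; b].
  by rewrite /= inE a_ne_b big_cons big_seq1 card_ord; apply.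
have u_ge0 : 0 <= u by rewrite divr_ge0.
have un : u * n%:R = m%:R by rewrite divfK // pnatr_eq0 -lt0n.
have le_k : u * k%:R <= u * #|votes_for n (pair2 a b) a|%:R by rewrite ler_wpM2l // ler_nat.
have : m%:R < 2 * (Xi sd (pair2 a b) a)%:R :> R.
  by move: hits_a; rewrite /Xi /hits; nra.
rewrite -natrM ltr_nat; lia.
Qed.

Lemma sum_card_deviation_ge (S : pred nat) (d : R) : 0 < d ->
  \sum_(a <- iota 1 n) #|[pred f : seeds n m | d <= deviation f (votes_for n S a)]|%:R
  <= m%:R * n%:R ^+ m.-1 / d ^+ 2 * n%:R.
Proof.
move=> d_gt0; apply: (@le_trans _ _ (\sum_(a <- iota 1 n)
    m%:R * n%:R ^+ m.-1 / d ^+ 2 * #|votes_for n S a|%:R)).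
  apply: ler_sum => a _.
  by have := @card_deviation_ge R 'I_m 'I_n (votes_for n S a) d; rewrite !card_ord; apply.
rewrite -mulr_sumr ler_wpM2l ?divr_ge0 ?mulr_ge0 ?exprn_ge0 ?(ltW d_gt0) //.
rewrite -natr_sum ler_nat.
by have := sum_card_fiber_le (fun x : 'I_n => vote n S x.+1) _ (iota_uniq 1 n); rewrite card_ord.
Qed.

End Election.

Section Partition.
Variables n l h : nat.
Hypotheses (n_even : n = 2 * h) (l_ge2 : 2 <= l) (l_le : l <= h - 1).

Lemma ApartP c :
  Apart n l c <-> 1 <= c <= l \/ exists2 i, 1 <= i <= h - l & c = l + 2 * i.
Proof.
rewrite /Apart n_even -mulnBr mul2n doubleK; split.
  case/orP => [|/hasP[i]]; first by left.
  by rewrite mem_iota => i_h /eqP ->; right; exists i => //; lia.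
case=> [->//|[i i_h ->]]; apply/orP; right; apply/hasP; exists i => //.
rewrite mem_iota; lia.
Qed.

Lemma Apart1 : Apart n l 1.
Proof. by apply/ApartP; left; lia. Qed.

Lemma Apart_tail c : n - l < c <= n -> ~~ Apart n l c.
Proof. by move=> c_n; apply/negP => /ApartP[|[i]]; lia. Qed.

Lemma Apart_gap a : Apart n l a -> a != 1 ->
  2 <= a <= n /\ Apart n l a.-1 || (3 <= a) && Apart n l a.-2.
Proof.
move=> /ApartP Aa a_ne1; split; first by case: Aa => [|[i]]; lia.
case: Aa => [a_l|[i i_h ->]].
  by apply/orP; left; apply/ApartP; left; lia.
apply/orP; right; apply/andP; split; first lia.
apply/ApartP; have [->|i_ne1] := eqVneq i 1; first by left; lia.
by right; exists i.-1; lia.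
Qed.

Lemma Bpart_succl : Bpart n l l.+1.
Proof. by apply/andP; split; [lia | apply/negP => /ApartP[|[i]]; lia]. Qed.

Lemma Bpart_head c : 0 < c <= l -> ~~ Bpart n l c.
Proof. by move=> c_l; rewrite negb_and negbK; apply/orP; right; apply/ApartP; left. Qed.

Lemma Bpart_gap b : Bpart n l b -> b != l.+1 ->
  2 <= b <= n /\ Bpart n l b.-1 || (3 <= b) && Bpart n l b.-2.
Proof.
move=> /andP[b_n nAb] b_ne.
have lt_lb : l.+1 < b.
  by rewrite ltn_neqAle eq_sym b_ne; apply: contraR nAb => ?; apply/ApartP; left; lia.
split; first lia.
case Ab1 : (Apart n l b.-1); last by apply/orP; left; apply/andP; split; [lia|rewrite Ab1].
apply/orP; right; apply/and3P; split; try lia.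
by move/ApartP: Ab1 => [|[i _ Eb]]; [lia|apply/negP => /ApartP[|[j]]; lia].
Qed.

Lemma card_votes_Apart1 : l.+1 <= #|votes_for n (Apart n l) 1|.
Proof.
have -> : l.+1 = size (0 :: iota (n - l) l) by rewrite /= size_iota.
apply: size_le_card => [|/=|x].
- by rewrite /= iota_uniq andbT mem_iota; lia.
- by apply/andP; split; [lia | apply/allP => x; rewrite mem_iota /=; lia].
rewrite inE mem_iota => /orP[/eqP x0|x_n]; apply/eqP.
  by rewrite x0; apply: vote_next; [lia | exact: Apart1 | lia].
by apply: vote_wrap; [lia | exact: Apart1 | move=> c ?; apply: Apart_tail; lia].
Qed.

Lemma card_votes_Bpart_succl : l.+1 <= #|votes_for n (Bpart n l) l.+1|.
Proof.
rewrite -[l.+1 in X in X <= _](size_iota 0); apply: size_le_card => [||x].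
- exact: iota_uniq.
- by apply/allP => x; rewrite mem_iota /=; lia.
rewrite mem_iota => x_l; apply/eqP; apply: vote_next; first lia.
  exact: Bpart_succl.
by move=> c ?; apply: Bpart_head; lia.
Qed.

Lemma card_votes_final : n - l <= #|votes_for n (pair2 1 l.+1) 1|.
Proof.
have -> : n - l = size (0 :: iota l.+1 (n - l).-1) by rewrite /= size_iota; lia.
apply: size_le_card => [|/=|x].
- by rewrite /= iota_uniq andbT mem_iota; lia.
- by apply/andP; split; [lia | apply/allP => x; rewrite mem_iota /=; lia].
rewrite inE mem_iota => /orP[/eqP x0|x_n]; apply/eqP.
  by rewrite x0; apply: vote_next; rewrite /pair2 ?eqxx //; lia.
by apply: vote_wrap; rewrite /pair2 ?eqxx //; [lia | move=> c ?; apply/norP; lia].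
Qed.

Local Open Scope ring_scope.
Variables (R : realType) (m : nat).
Local Notation u := (m%:R / n%:R : R).

Lemma two_round_wins1_of_deviation (sd : seeds n m) (d d2 : R) :
  2 * d <= u * (l%:R - 1) -> d2 <= u * (n%:R / 2 - l%:R) ->
  (forall a, a \in iota 1 n -> deviation sd (votes_for n (Apart n l) a) < d) ->
  (forall b, b \in iota 1 n -> deviation sd (votes_for n (Bpart n l) b) < d) ->
  deviation sd (votes_for n (pair2 1 l.+1) 1) < d2 ->
  two_round_wins sd (Apart n l) (Bpart n l) 1.
Proof.
move=> d_le d2_le devA devB devP; have n_gt0 : (0 < n)%N by lia.
have gap : u * (l.+1%:R - 2%:R) = u * (l%:R - 1) by rewrite -addn1 natrD; ring.
apply/orP; left; apply/andP; split.
  apply: (@wins_of_deviation R n m sd n_gt0 _ 1 l.+1 2 d); rewrite ?gap //.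
  - exact: Apart1.
  - exact: card_votes_Apart1.
  by move=> a Aa a_ne1 _; have [? ?] := Apart_gap _ Aa a_ne1; apply: card_votes_near.
apply/hasP; exists l.+1; first by rewrite mem_iota; lia.
apply/andP; split.
  apply: (@wins_of_deviation R n m sd n_gt0 _ l.+1 l.+1 2 d); rewrite ?gap //.
  - lia.
  - exact: Bpart_succl.
  - exact: card_votes_Bpart_succl.
  by move=> b Bb b_ne _; have [? ?] := Bpart_gap _ Bb b_ne; apply: card_votes_near.
apply: (@duel_of_deviation R n m sd n_gt0 1 l.+1 (n - l) d2) => //.
- lia.
- exact: card_votes_final.
- by rewrite natrB; [lra | lia].
Qed.

Definition deviates (S : pred nat) (e : R) (a : nat) : pred (seeds n m) :=
  [pred sd | e <= deviation sd (votes_for n S a)].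

Definition bad_events (d d2 : R) : seq (pred (seeds n m)) :=
  [seq deviates (Apart n l) d a | a <- iota 1 n] ++
  [seq deviates (Bpart n l) d b | b <- iota 1 n] ++ [:: deviates (pair2 1 l.+1) d2 1%N].

Lemma two_round_wins1_or_bad (d d2 : R) (sd : seeds n m) :
  2 * d <= u * (l%:R - 1) -> d2 <= u * (n%:R / 2 - l%:R) ->
  two_round_wins sd (Apart n l) (Bpart n l) 1 || has (fun E => E sd) (bad_events d d2).
Proof.
move=> d_le d2_le; apply/orP; case: hasP => [|no_bad]; first by right.
have small S e a : deviates S e a \in bad_events d d2 -> deviation sd (votes_for n S a) < e.
  by move=> E_in; rewrite ltNge; apply/negP => E_sd; apply: no_bad; exists (deviates S e a).
left; apply: two_round_wins1_of_deviation d_le d2_le _ _ _.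
- by move=> a a_n; apply: small; rewrite !mem_cat map_f.
- by move=> b b_n; apply: small; rewrite !mem_cat map_f ?orbT.
- by apply: small; rewrite !mem_cat mem_seq1 eqxx !orbT.
Qed.

Lemma sum_card_bad_events_le (d d2 : R) : (0 < m)%N -> 0 < d -> 0 < d2 ->
  (\sum_(E <- bad_events d d2) #|E|)%:R <=
  m%:R * (2 / d ^+ 2 + 1 / d2 ^+ 2) * (n ^ m)%:R.
Proof.
move=> m_gt0 d_gt0 d2_gt0; have n_gt0 : (0 < n)%N by lia.
set N : R := (n ^ m)%:R.
have scale e : m%:R * n%:R ^+ m.-1 / e * n%:R = m%:R * N * (1 / e) :> R.
  by rewrite mulrAC -(mulrA _ (_ ^+ _)) -exprSr prednK // /N natrX div1r.
have le_AB S : \sum_(a <- iota 1 n) #|deviates S d a|%:R <= m%:R * N * (1 / d ^+ 2).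
  by rewrite -scale; apply: sum_card_deviation_ge.
have le_P : #|deviates (pair2 1 l.+1) d2 1|%:R <= m%:R * N * (1 / d2 ^+ 2).
  rewrite -scale; set t := votes_for n (pair2 1 l.+1) 1.
  apply: (@le_trans _ _ (m%:R * n%:R ^+ m.-1 / d2 ^+ 2 * #|t|%:R)).
    by have := @card_deviation_ge R 'I_m 'I_n t d2; rewrite !card_ord; apply.
  rewrite ler_wpM2l ?divr_ge0 ?mulr_ge0 ?exprn_ge0 ?(ltW d2_gt0) // ler_nat.
  by rewrite -[n in (_ <= n)%N]card_ord max_card.
rewrite !big_cat /= !big_map big_seq1 !natrD !natr_sum.
have := le_AB (Apart n l); have := le_AB (Bpart n l).
have -> : m%:R * (2 / d ^+ 2 + 1 / d2 ^+ 2) * N =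
  2 * (m%:R * N * (1 / d ^+ 2)) + m%:R * N * (1 / d2 ^+ 2) by ring.
lra.
Qed.

Lemma p1_ge (d d2 : R) : (0 < m)%N -> 0 < d -> 0 < d2 ->
  2 * d <= u * (l%:R - 1) -> d2 <= u * (n%:R / 2 - l%:R) ->
  1 - m%:R * (2 / d ^+ 2 + 1 / d2 ^+ 2) <= p1 R n m l.
Proof.
move=> m_gt0 d_gt0 d2_gt0 d_le d2_le; have n_gt0 : (0 < n)%N by lia.
pose W := [pred sd : seeds n m | two_round_wins sd (Apart n l) (Bpart n l) 1].
have union_bound : (n ^ m <= #|W| + \sum_(E <- bad_events d d2) #|E|)%N.
  have -> : (n ^ m)%N = #|seeds n m| by rewrite card_ffun !card_ord.
  rewrite -(cardC W) leq_add2l; apply: leq_trans (card_has_le _); apply: subset_leq_card.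
  apply/fintype.subsetP => sd; rewrite !inE => W'sd.
  by have := two_round_wins1_or_bad d d2 sd d_le d2_le; rewrite (negbTE W'sd).
have := sum_card_bad_events_le d d2 m_gt0 d_gt0 d2_gt0.
have N_gt0 : 0 < (n ^ m)%:R :> R by rewrite ltr0n expn_gt0 n_gt0.
rewrite [p1 _ _ _ _]/p1 -/W ler_pdivlMr // mulrBl mul1r.
move: union_bound; rewrite -(ler_nat R) natrD; lra.
Qed.


End Partition.

Section Limit.
Local Open Scope ring_scope.
Variable R : realType.

Lemma p1_le1 n m l : (0 < n)%N -> p1 R n m l <= 1.
Proof.
move=> n_gt0; rewrite /p1 ler_pdivrMr ?ltr0n ?expn_gt0 ?n_gt0 // mul1r ler_nat.
by apply: leq_trans (max_card _) _; rewrite card_ffun !card_ord.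
Qed.

(* Chebyshev with deviations [d = eta_min m / 4] in the first round and
   [d2 = (1/2 - eta_max) m] in the second. *)
Lemma p1_ge_eta (eta_min eta_max : R) n m l :
  0 < eta_min -> eta_max < 1 / 2 -> (0 < m)%N -> ~~ odd n -> (2 <= l <= n./2 - 1)%N ->
  eta_min <= l%:R / n%:R <= eta_max ->
  1 - (32 / eta_min ^+ 2 + 1 / (1 / 2 - eta_max) ^+ 2) / m%:R <= p1 R n m l.
Proof.
move=> eta_min_gt0 eta_max_lt m_gt0 n_even /andP[l_ge2 l_le] /andP[eta_min_le eta_max_ge].
have n_half : n = (2 * n./2)%N by rewrite -[in LHS](odd_double_half n) (negbTE n_even) mul2n.
move: n_half l_le; set h := n./2 => n_half l_le; clearbody h.
have n_gt0 : (0 < n)%N by lia.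
set d := eta_min * m%:R / 4; set c := 1 / 2 - eta_max; set d2 := m%:R * c.
have m_pos : 0 < m%:R :> R by rewrite ltr0n.
have c_gt0 : 0 < c by rewrite /c; lra.
have d_gt0 : 0 < d by rewrite /d divr_gt0 // mulr_gt0.
have d2_gt0 : 0 < d2 by rewrite /d2 mulr_gt0.
set r := l%:R / n%:R in eta_min_le eta_max_ge.
have u_n : m%:R / n%:R * n%:R = m%:R :> R by rewrite divfK // pnatr_eq0 -lt0n.
have r_ge : m%:R * eta_min <= m%:R * r by rewrite ler_wpM2l // ltW.
have r_le : m%:R * r <= m%:R * eta_max by rewrite ler_wpM2l // ltW.
have u2_le : m%:R / n%:R * 2 <= m%:R * r.
  rewrite /r mulrA mulrAC ler_wpM2r ?invr_ge0 // ler_wpM2l //.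
  by rewrite ler_nat.
have := @p1_ge n l h n_half l_ge2 l_le R m d d2 m_gt0 d_gt0 d2_gt0.
have -> : m%:R * (2 / d ^+ 2 + 1 / d2 ^+ 2) = (32 / eta_min ^+ 2 + 1 / c ^+ 2) / m%:R.
  by rewrite /d /d2; field; rewrite !gt_eqF.
apply.
- have -> : m%:R / n%:R * (l%:R - 1) = m%:R * r - m%:R / n%:R by rewrite /r; ring.
  by rewrite /d; lra.
- have -> : m%:R / n%:R * (n%:R / 2 - l%:R) = (m%:R / n%:R * n%:R) / 2 - m%:R * r.
    by rewrite /r; ring.
  by rewrite u_n /d2 /c; lra.
Qed.

End Limit.

Local Open Scope classical_set_scope.

Theorem mainTheorem11 (R : realType) (eta_min eta_max : R)
  (m_ n_ l_ : nat -> nat) :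
  (0 < eta_min)%R -> (eta_min <= eta_max)%R -> (eta_max < 1 / 2)%R ->
  (forall k, 0 < m_ k)%N ->
  (forall M : nat, exists K : nat, forall k, (K <= k)%N -> (M <= m_ k)%N) ->
  (forall k, ~~ odd (n_ k) /\ (6 <= n_ k)%N) ->
  (forall k, (2 <= l_ k)%N /\ (l_ k <= (n_ k)./2 - 1)%N) ->
  (forall k, (eta_min <= (l_ k)%:R / (n_ k)%:R <= eta_max)%R) ->
  (fun k => p1 R (n_ k) (m_ k) (l_ k)) @ \oo --> (1%R : R^o).
Proof.
move=> eta_min_gt0 _ eta_max_lt m_gt0 m_unbounded n_ok l_ok eta_ok.
set C := (32 / eta_min ^+ 2 + 1 / (1 / 2 - eta_max) ^+ 2)%R.
have C_ge0 : (0 <= C)%R by rewrite addr_ge0 ?divr_ge0 ?exprn_ge0 //; lra.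
apply/cvgrPdist_lt => e e_gt0.
have [K m_large] := m_unbounded (Num.Def.archi_bound (C / e)).+1.
exists K => // k /= le_Kk.
have [n_even n_ge6] := n_ok k; have [l_ge2 l_le] := l_ok k.
have lb := p1_ge_eta R eta_min eta_max (n_ k) (m_ k) (l_ k) eta_min_gt0 eta_max_lt (m_gt0 k) n_even
  ltac:(by rewrite l_ge2 l_le) (eta_ok k).
have ub := p1_le1 R (n_ k) (m_ k) (l_ k) (ltn_trans (isT : 0 < 5)%N n_ge6).
have m_pos : (0 < (m_ k)%:R :> R)%R by rewrite ltr0n.
have C_small : (C / (m_ k)%:R < e)%R.
  rewrite ltr_pdivrMr // -ltr_pdivrMl // mulrC.
  apply: lt_le_trans (archi_boundP (divr_ge0 C_ge0 (ltW e_gt0))) _.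
  by rewrite ler_nat; apply: leq_trans (m_large k le_Kk).
rewrite ger0_norm ?subr_ge0 //; rewrite -/C in lb; lra.
Qed.
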